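(* Let $\mathcal{X}$ be a probability distribution over a set of queries (the set is also denoted $\mathcal{X}$), let $k \geq 1$, and let $\hat q_1,\dots,\hat q_k,\hat c_1,\dots,\hat c_k : \mathcal{X} \to \mathbb{R}$ be integrable functions (quality and cost estimates of $k$ models). Let $B \in \mathbb{R}$ and assume there is at least one routing strategy $s$ with $C(s) \leqslant B$. Assume moreover that the set $\Lambda$ is finite. Then: (i) if some routing strategy $s \in S_0$ satisfies $C(s) \leqslant B$, then $s$ maximizes $Q$ over all routing strategies $s'$ with $C(s') \leqslant B$; (ii) otherwise, there exists $\lambda^* \in \mathbb{R}^+$ such that $S_{\lambda^*}$ contains a routing strategy with cost exactly $B$, and every routing strategy $s \in \bigcup_{\lambda \in \mathbb{R}^+} S_\lambda$ with $C(s) = B$ maximizes $Q$ over all routing strategies $s'$ with $C(s') \leqslant B$ (in particular all such strategies achieve the same optimal quality).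
   Context: A routing strategy is a measurable function $s : \mathcal{X} \to \mathbb{R}^k$ with $s_i(x) \geq 0$ for all $i$ and $\sum_{i=1}^k s_i(x) = 1$ for all $x \in \mathcal{X}$ ($s_i(x)$ is the probability of sending query $x$ to model $i$). Its expected quality is $Q(s) = \mathbb{E}_{x \sim \mathcal{X}}\left[\sum_{i=1}^k s_i(x)\hat q_i(x)\right]$ and its expected cost is $C(s) = \mathbb{E}_{x \sim \mathcal{X}}\left[\sum_{i=1}^k s_i(x)\hat c_i(x)\right]$. For $\lambda \in \mathbb{R}^+$ (nonnegative reals), $S_\lambda$ denotes the set of routing strategies $s$ such that for all $x \in \mathcal{X}$ and all $i \in \{1,\dots,k\}$: if $\hat q_i(x) - \lambda \hat c_i(x) < \max_j \left(\hat q_j(x) - \lambda \hat c_j(x)\right)$ then $s_i(x) = 0$. $\Lambda$ denotes the set of $\lambda \in \mathbb{R}$ for which there exist $x \in \mathcal{X}$ and $i \neq j$ with $\hat q_i(x) - \lambda \hat c_i(x) = \hat q_j(x) - \lambda \hat c_j(x)$. *)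

From HB Require Import structures.
From mathcomp Require Import all_boot all_order all_algebra.
From mathcomp Require Import all_classical all_reals all_analysis.
Set Implicit Arguments. Unset Strict Implicit. Unset Printing Implicit Defensive.
Import Order.TTheory GRing.Theory Num.Theory.
Local Open Scope classical_set_scope.
Local Open Scope ring_scope.

Section Routing.
Context {d : measure_display} {T : measurableType d} {R : realType}.
Variable (P : probability T R) (k : nat).
Variables (q c : 'I_k -> T -> R).

Definition routing (s : T -> 'I_k -> R) : Prop :=
  (forall i, measurable_fun setT (fun x => s x i)) /\
  (forall x i, 0 <= s x i) /\
  (forall x, \sum_(i < k) s x i = 1).

Definition Qual (s : T -> 'I_k -> R) : \bar R :=
  (\int[P]_x (\sum_(i < k) s x i * q i x)%:E)%E.
Definition Cost (s : T -> 'I_k -> R) : \bar R :=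
  (\int[P]_x (\sum_(i < k) s x i * c i x)%:E)%E.

(* max_j (q_j x - lam c_j x); the fold is seeded with the i-th value, which
   is itself among the j's, so this is exactly the maximum over all j *)
Definition max_score (lam : R) (x : T) (i : 'I_k) : R :=
  \big[Num.max/(q i x - lam * c i x)]_(j < k) (q j x - lam * c j x).

Definition in_S (lam : R) (s : T -> 'I_k -> R) : Prop :=
  forall x i, q i x - lam * c i x < max_score lam x i -> s x i = 0.

Definition Lambda : set R :=
  [set lam | exists x (i j : 'I_k), i != j /\
     q i x - lam * c i x = q j x - lam * c j x].

Definition optimal (B : R) (s : T -> 'I_k -> R) : Prop :=
  forall s', routing s' -> (Cost s' <= B%:E)%E -> (Qual s' <= Qual s)%E.
End Routing.

From HB Require Import structures.
From mathcomp Require Import all_boot all_order all_algebra.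
From mathcomp Require Import all_classical all_reals all_analysis.
From mathcomp Require Import measurable_realfun lra.

Set Implicit Arguments.
Unset Strict Implicit.
Unset Printing Implicit Defensive.
Import Order.TTheory GRing.Theory Num.Theory.
Local Open Scope classical_set_scope.
Local Open Scope ring_scope.

(* For lam >= 0 a strategy in S_lam maximizes the score q_i - lam c_i at every
   query, hence maximizes the Lagrangian Q - lam C among all strategies; when
   lam = 0 or its cost is exactly B this makes it optimal under the budget B.

   For existence, route every query to a model of maximal score, breaking ties
   towards the cheapest model (cost phi lam) or the most expensive one (cost
   psi lam).  If two models agreed on both q and c at some query, Lambda would
   be all of R; so as Lambda is finite the tie-breaking is well defined, and
   the greedy choice only changes at the finitely many points of Lambda: for
   a < b with no point of Lambda in between, phi a = psi b.  Moreover
   phi 0 > B when no feasible strategy lies in S_0, while above Lambda the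
   greedy choice is the cheapest model, so phi M <= B.  Bisecting at the
   points of Lambda yields lam with phi lam <= B < psi lam, and a convex
   combination of the two greedy strategies, still in S_lam, costs exactly B. *)

Section RealLine.
Context {R : realType}.

Lemma finite_set_ub (A : set R) : finite_set A ->
  exists2 M, 0 < M & forall r, A r -> r < M.
Proof.
move=> /finite_seqP[s ->]; exists (1 + \big[Num.max/0]_(r <- s) r).
  by rewrite ltr_pwDl // bigmax_ge_id.
move=> r /= rs; have := @le_bigmax_seq _ _ _ s 0 r xpredT id rs erefl; lra.
Qed.

Lemma discrete_ivt (L : set R) (phi psi : R -> R) (B : R) :
  (forall a b, a < b -> (forall r, a < r < b -> ~ L r) -> phi a = psi b) ->
  finite_set L -> forall a b, a < b -> B < phi a -> phi b <= B ->
  exists2 lam, a <= lam <= b & phi lam <= B < psi lam.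
Proof.
move=> phi_psi /finite_seqP[s Ls].
suff ivt_in (l : seq R) a b : a < b ->
    (forall r, a < r < b -> L r -> r \in l) -> B < phi a -> phi b <= B ->
    exists2 lam, a <= lam <= b & phi lam <= B < psi lam.
  by move=> a b ab; apply: (ivt_in s) => // r _; rewrite Ls.
elim: l a b => [|h l IH] a b ab Ll Ba Bb.
  exists b; first by rewrite (ltW ab) lexx.
  by rewrite Bb -(phi_psi a b) // => r rab /(Ll r rab).
have [/andP[ah hb]|hab] := boolP (a < h < b); last first.
  apply: IH => // r rab Lr; move: (Ll r rab Lr); rewrite inE => /predU1P[rh|//].
  by rewrite -rh rab in hab.
have Lah r : a < r < h -> L r -> r \in l.
  move=> /andP[ar rh] Lr; have /predU1P[rh'|//] : r \in h :: l.
    by apply: Ll; rewrite // ar (lt_trans rh hb).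
  by rewrite rh' ltxx in rh.
have Lhb r : h < r < b -> L r -> r \in l.
  move=> /andP[hr rb] Lr; have /predU1P[hr'|//] : r \in h :: l.
    by apply: Ll; rewrite // rb (lt_trans ah hr).
  by rewrite hr' ltxx in hr.
have [Bh|Bh] := lerP (phi h) B.
  have [lam /andP[al lh] Blam] := IH a h ah Lah Ba Bh.
  by exists lam; rewrite // al (le_trans lh) ?ltW.
have [lam /andP[hl lb] Blam] := IH h b hb Lhb Bh Bb.
by exists lam; rewrite // lb (le_trans (ltW ah)).
Qed.

End RealLine.

Section Pointwise.
Context {d : measure_display} {T : measurableType d} {R : realType}.
Variables (k : nat) (q c : 'I_k -> T -> R).

Definition score (lam : R) (i : 'I_k) (x : T) : R := q i x - lam * c i x.

Lemma score_le_max_score lam x i j : score lam j x <= max_score q c lam x i.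
Proof. exact: le_bigmax. Qed.

Lemma max_score_le lam x i m :
  (forall j, score lam j x <= m) -> max_score q c lam x i <= m.
Proof. by move=> le_m; apply: bigmax_le => [|j _]; apply: le_m. Qed.

Lemma score_le_mean_in_S lam s x j : in_S q c lam s ->
  (forall i, 0 <= s x i) -> \sum_(i < k) s x i = 1 ->
  score lam j x <= \sum_(i < k) s x i * score lam i x.
Proof.
move=> sS s_ge0 s_sum1; rewrite -[leLHS]mul1r -s_sum1 mulr_suml.
apply: ler_sum => i _.
have [->|s_neq0] := eqVneq (s x i) 0; first by rewrite !mul0r.
rewrite ler_wpM2l // (le_trans (score_le_max_score _ _ i _)) //.
by rewrite leNgt; apply: contra s_neq0 => /sS ->.
Qed.

Lemma mean_score_le_in_S lam s s' x : in_S q c lam s ->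
  (forall i, 0 <= s x i) -> \sum_(i < k) s x i = 1 ->
  (forall i, 0 <= s' x i) -> \sum_(i < k) s' x i = 1 ->
  \sum_(i < k) s' x i * score lam i x <= \sum_(i < k) s x i * score lam i x.
Proof.
move=> sS s_ge0 s_sum1 s'_ge0 s'_sum1.
rewrite -[leRHS]mul1r -s'_sum1 mulr_suml; apply: ler_sum => j _.
by rewrite ler_wpM2l // score_le_mean_in_S.
Qed.

Lemma Lambda_root x i j : i != j -> c i x != c j x ->
  Lambda q c ((q i x - q j x) / (c i x - c j x)).
Proof.
move=> ij cij; exists x, i, j; split => //.
have : (q i x - q j x) / (c i x - c j x) * (c i x - c j x) = q i x - q j x.
  by rewrite divfK // subr_eq0.
lra.
Qed.

(* [sg = 1] breaks ties of the score towards the cheaper model, [sg = -1]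
   towards the more expensive one. *)
Definition beats (lam sg : R) (i j : 'I_k) (x : T) : bool :=
  (score lam j x < score lam i x) ||
  ((score lam j x == score lam i x) && (sg * c i x < sg * c j x)).

Definition winner (lam sg : R) (i : 'I_k) (x : T) : bool :=
  \big[andb/true]_(j < k | j != i) beats lam sg i j x.

Lemma winnerP lam sg i x :
  reflect (forall j, j != i -> beats lam sg i j x) (winner lam sg i x).
Proof.
rewrite /winner big_andE; apply: (iffP forallP) => [W j|W j].
  exact/implyP/W.
exact/implyP/W.
Qed.

Lemma winner_uniq lam sg i j x :
  winner lam sg i x -> winner lam sg j x -> i = j.
Proof.
move=> /winnerP Wi /winnerP Wj; apply/eqP/negPn/negP => ij.
have ji : j != i by rewrite eq_sym.
move: (Wi j ji) (Wj i ij); rewrite /beats.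
by move=> /orP[h1|/andP[/eqP e1 h1]] /orP[h2|/andP[/eqP e2 h2]]; lra.
Qed.

Lemma winner_max_score lam sg i x :
  winner lam sg i x -> max_score q c lam x i <= score lam i x.
Proof.
move=> /winnerP W; apply: max_score_le => j; have [->//|ji] := eqVneq j i.
by move: (W j ji) => /orP[/ltW //|/andP[/eqP -> _]].
Qed.

Definition greedy (lam sg : R) : T -> 'I_k -> R :=
  fun x i => (winner lam sg i x)%:R.

Lemma greedy_in_S lam sg : in_S q c lam (greedy lam sg).
Proof.
move=> x i lt_max; rewrite /greedy; case: (boolP (winner _ _ _ _)) => // W.
by move: (winner_max_score W); rewrite leNgt lt_max.
Qed.

Lemma greedy_mean lam sg (f : 'I_k -> R) i x :
  winner lam sg i x -> \sum_(j < k) greedy lam sg x j * f j = f i.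
Proof.
move=> W; rewrite (bigD1 i) //= /greedy W mul1r big1 ?addr0 // => j ji.
case: (boolP (winner _ _ j x)) => [Wj|_]; last by rewrite mul0r.
by rewrite (winner_uniq Wj W) eqxx in ji.
Qed.

Lemma bounded_Lambda_qc_inj M : (forall r, Lambda q c r -> r < M) ->
  forall x i j, q i x = q j x -> c i x = c j x -> i = j.
Proof.
move=> ub_M x i j qij cij; apply/eqP/negPn/negP => ij.
suff /ub_M : Lambda q c M by rewrite ltxx.
by exists x, i, j; rewrite qij cij.
Qed.

Definition mix (t : R) (g h : T -> 'I_k -> R) : T -> 'I_k -> R :=
  fun x i => t * g x i + (1 - t) * h x i.

Lemma in_S_mix lam t g h : in_S q c lam g -> in_S q c lam h ->
  in_S q c lam (mix t g h).
Proof.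
by move=> gS hS x i lt_max; rewrite /mix (gS x i) ?(hS x i) // !mulr0 addr0.
Qed.

Hypothesis qc_inj : forall x i j, q i x = q j x -> c i x = c j x -> i = j.

Lemma winner_exists lam sg x (i0 : 'I_k) : sg != 0 -> exists i, winner lam sg i x.
Proof.
move=> sg0.
have [j0 _ j0_max] := @arg_maxP _ _ _ i0 xpredT (fun j => score lam j x) erefl.
have [i /eqP i_max i_min] := @arg_minP _ _ _ j0
  (fun j => score lam j x == score lam j0 x) (fun j => sg * c j x) (eqxx _).
exists i; apply/winnerP => j ji; rewrite /beats i_max.
have [//|ge_j] := ltP; have e : score lam j x = score lam j0 x.
  by apply/le_anti; rewrite ge_j andbT; exact: j0_max.
rewrite e eqxx lt_neqAle i_min ?e // andbT; apply: contra ji => /eqP sgc.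
have cij : c i x = c j x by apply: (mulfI sg0).
apply/eqP/qc_inj => //; move: e; rewrite -i_max /score cij; lra.
Qed.

Lemma greedy_sum1 lam sg x (i0 : 'I_k) : sg != 0 ->
  \sum_(i < k) greedy lam sg x i = 1.
Proof.
move=> sg0; have [i W] := winner_exists lam x i0 sg0.
by rewrite -[RHS](greedy_mean (fun=> 1) W); apply: eq_bigr => j _; rewrite mulr1.
Qed.

Section NoBreakpoint.
Variables (a b : R).
Hypotheses (lt_ab : a < b) (no_Lambda : forall r, a < r < b -> ~ Lambda q c r).

Lemma beats_shift i j x : i != j -> beats a 1 i j x -> beats b (-1) i j x.
Proof.
move=> ij; rewrite /beats /score !mul1r !mulN1r.
case/orP=> [lt_a|/andP[/eqP eq_a lt_c]]; last first.
  have : 0 < (b - a) * (c j x - c i x) by rewrite mulr_gt0 // subr_gt0.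
  by move=> ?; apply/orP; left; lra.
have [//|/= le_b] := ltP.
have : 0 < (b - a) * (c i x - c j x) by lra.
rewrite pmulr_rgt0 ?subr_gt0 // => lt_c.
have [eq_b|ne_b] /= := eqVneq; first lra.
have lt_b : q i x - b * c i x < q j x - b * c j x.
  by rewrite lt_neqAle eq_sym ne_b le_b.
exfalso; move: (Lambda_root ij (negbT (gt_eqF lt_c))); apply: no_Lambda.
by rewrite ltr_pdivlMr ?ltr_pdivrMr ?subr_gt0 //; apply/andP; split; lra.
Qed.

Lemma winner_shift (i0 : 'I_k) i x : winner a 1 i x = winner b (-1) i x.
Proof.
have shift j : winner a 1 j x -> winner b (-1) j x.
  move=> /winnerP W; apply/winnerP => l lj.
  by apply: beats_shift; [rewrite eq_sym | exact: W].
apply/idP/idP; first exact: shift.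
move=> Wb; have [j Wj] := winner_exists a x i0 (oner_neq0 R).
by rewrite (winner_uniq Wb (shift _ Wj)).
Qed.

Lemma greedy_shift (i0 : 'I_k) : greedy a 1 = greedy b (-1).
Proof.
by apply/funext => x; apply/funext => i; rewrite /greedy (winner_shift i0).
Qed.

End NoBreakpoint.

Lemma winner_cheapest M i j x : (forall r, Lambda q c r -> r < M) ->
  winner M 1 i x -> c i x <= c j x.
Proof.
move=> ub_M /winnerP W; have [->//|ji] := eqVneq j i.
rewrite leNgt; apply/negP => lt_c.
have ij : i != j by rewrite eq_sym.
have := ub_M _ (Lambda_root ij (negbT (gt_eqF lt_c))).
rewrite ltr_pdivrMr ?subr_gt0 //.
by move: (W j ji); rewrite /beats /score !mul1r => /orP[|/andP[_]]; lra.
Qed.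

Lemma greedy_cheapest M (w : 'I_k -> R) x (i0 : 'I_k) :
  (forall r, Lambda q c r -> r < M) ->
  (forall i, 0 <= w i) -> \sum_(i < k) w i = 1 ->
  \sum_(i < k) greedy M 1 x i * c i x <= \sum_(i < k) w i * c i x.
Proof.
move=> ub_M w_ge0 w_sum1; have [i W] := winner_exists M x i0 (oner_neq0 R).
rewrite (greedy_mean (c^~ x) W) -[leLHS]mul1r -w_sum1 mulr_suml.
by apply: ler_sum => j _; rewrite ler_wpM2l // (winner_cheapest _ ub_M W).
Qed.

End Pointwise.

Section Expectation.
Context {d : measure_display} {T : measurableType d} {R : realType}.
Variables (P : probability T R) (k : nat).
Implicit Types (t : R) (f q c : 'I_k -> T -> R) (s g h : T -> 'I_k -> R).

Lemma routing_le1 s x i : routing s -> s x i <= 1.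
Proof.
move=> [_ [s_ge0 s_sum1]]; rewrite -(s_sum1 x) (bigD1 i) //= lerDl.
exact: sumr_ge0.
Qed.

Lemma integrable_routing f s :
  (forall i, P.-integrable setT (fun x => (f i x)%:E)) -> routing s ->
  P.-integrable setT (fun x => (\sum_(i < k) s x i * f i x)%:E).
Proof.
move=> f_int s_routing; have [s_meas [s_ge0 _]] := s_routing.
apply: (eq_integrable measurableT
  (fun x => \sum_(i < k) (s x i)%:E * (f i x)%:E)%E).
  by move=> x _; rewrite sumEFin.
apply: (integrable_sum measurableT) => i _.
apply: (integrableMr measurableT (s_meas i) _ (f_int i)).
exists 1; split => // r r1 x _ /=.
by rewrite ger0_norm // (le_trans (routing_le1 x i s_routing)) // ltW.
Qed.

Lemma Cost_fin_num f s :
  (forall i, P.-integrable setT (fun x => (f i x)%:E)) -> routing s ->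
  Cost P f s \is a fin_num.
Proof.
by move=> f_int s_routing; apply: (integrable_fin_num measurableT);
  exact: integrable_routing.
Qed.

Lemma le_Cost f s s' :
  (forall i, P.-integrable setT (fun x => (f i x)%:E)) ->
  routing s -> routing s' ->
  (forall x, \sum_(i < k) s x i * f i x <= \sum_(i < k) s' x i * f i x) ->
  (Cost P f s <= Cost P f s')%E.
Proof.
move=> f_int s_routing s'_routing le_f; apply: le_integral => //.
- exact: integrable_routing.
- exact: integrable_routing.
- by move=> x _; rewrite lee_fin.
Qed.

Lemma Cost_score q c lam s :
  (forall i, P.-integrable setT (fun x => (q i x)%:E)) ->
  (forall i, P.-integrable setT (fun x => (c i x)%:E)) -> routing s ->
  Cost P (score q c lam) s = (fine (Qual P q s) - lam * fine (Cost P c s))%:E.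
Proof.
move=> q_int c_int s_routing.
have q_fin : Qual P q s \is a fin_num by exact: Cost_fin_num.
have c_fin := Cost_fin_num c_int s_routing.
have c_int' := integrable_routing c_int s_routing.
rewrite EFinB EFinM !fineK // -integralZl // -integralB_EFin //; last 2 first.
- exact: (integrable_routing q_int s_routing).
- exact: (integrableZl measurableT lam c_int').
apply: eq_integral => x _; rewrite /score -EFinB.
congr EFin; rewrite mulr_sumr -sumrB; apply: eq_bigr => i _.
by rewrite mulrBr mulrCA.
Qed.

Lemma routing_mix t g h : 0 <= t <= 1 -> routing g -> routing h ->
  routing (mix t g h).
Proof.
move=> /andP[t_ge0 t_le1] [g_meas [g_ge0 g_sum1]] [h_meas [h_ge0 h_sum1]].
split; [|split] => [i|x i|x].
- by apply: measurable_funD; apply: measurable_funM.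
- by rewrite addr_ge0 // mulr_ge0 // subr_ge0.
- by rewrite big_split /= -!mulr_sumr g_sum1 h_sum1 !mulr1 subrKC.
Qed.

Lemma Cost_mix f t g h :
  (forall i, P.-integrable setT (fun x => (f i x)%:E)) ->
  routing g -> routing h ->
  Cost P f (mix t g h) = (t * fine (Cost P f g) + (1 - t) * fine (Cost P f h))%:E.
Proof.
move=> f_int g_routing h_routing.
have g_int := integrable_routing f_int g_routing.
have h_int := integrable_routing f_int h_routing.
rewrite EFinD !EFinM !fineK ?Cost_fin_num // -!integralZl // -integralD_EFin //.
- apply: eq_integral => x _; rewrite -EFinD /mix; congr EFin.
  by rewrite !mulr_sumr -big_split; apply: eq_bigr => i _; rewrite mulrDl !mulrA.
- exact: (integrableZl measurableT t g_int).
- exact: (integrableZl measurableT (1 - t) h_int).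
Qed.

Section Lagrangian.
Variables (q c : 'I_k -> T -> R).
Hypotheses (q_int : forall i, P.-integrable setT (fun x => (q i x)%:E))
           (c_int : forall i, P.-integrable setT (fun x => (c i x)%:E)).

Lemma integrable_score lam i :
  P.-integrable setT (fun x => (score q c lam i x)%:E).
Proof.
apply: (eq_integrable measurableT
  ((fun x => (q i x)%:E) \- (fun x => lam%:E * (c i x)%:E))%E).
  by move=> x _; rewrite /score /= EFinB EFinM.
by apply: (integrableB measurableT) => //; exact: integrableZl.
Qed.

Lemma Lagrangian_le_in_S lam s s' :
  routing s -> in_S q c lam s -> routing s' ->
  fine (Qual P q s') - lam * fine (Cost P c s') <=
  fine (Qual P q s) - lam * fine (Cost P c s).
Proof.
move=> s_routing sS s'_routing.
rewrite -lee_fin -!Cost_score // le_Cost //; first exact: integrable_score.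
have [_ [s_ge0 s_sum1]] := s_routing; have [_ [s'_ge0 s'_sum1]] := s'_routing.
by move=> x; apply: mean_score_le_in_S.
Qed.

Lemma optimal_in_S B lam s : 0 <= lam -> routing s -> in_S q c lam s ->
  (Cost P c s <= B%:E)%E -> lam = 0 \/ Cost P c s = B%:E ->
  optimal P q c B s.
Proof.
move=> lam_ge0 s_routing sS le_B slack s' s'_routing le'_B.
have Qs : Qual P q s \is a fin_num := Cost_fin_num q_int s_routing.
have Qs' : Qual P q s' \is a fin_num := Cost_fin_num q_int s'_routing.
have Cs := Cost_fin_num c_int s_routing.
have Cs' := Cost_fin_num c_int s'_routing.
rewrite -(fineK Qs) -(fineK Qs') lee_fin.
rewrite -(fineK Cs) lee_fin in le_B; rewrite -(fineK Cs') lee_fin in le'_B.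
have slackness : lam * (B - fine (Cost P c s)) = 0.
  by case: slack => [->|->]; rewrite ?mul0r //= subrr mulr0.
have : 0 <= lam * (B - fine (Cost P c s')) by rewrite mulr_ge0 ?subr_ge0.
have := Lagrangian_le_in_S s_routing sS s'_routing.
lra.
Qed.

End Lagrangian.

End Expectation.

Section GreedyRouting.
Context {d : measure_display} {T : measurableType d} {R : realType}.
Variables (k : nat) (q c : 'I_k -> T -> R).
Hypotheses (q_meas : forall i, measurable_fun setT (q i))
           (c_meas : forall i, measurable_fun setT (c i)).

Lemma measurable_score lam i : measurable_fun setT (score q c lam i).
Proof. by apply: measurable_funB => //; apply: measurable_funM. Qed.

Lemma measurable_winner lam sg i : measurable_fun setT (winner q c lam sg i).
Proof.
rewrite /winner; elim: (index_enum _) => [|j r IH].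
  by under eq_fun do rewrite big_nil; exact: measurable_cst.
under eq_fun do rewrite big_cons; case: (j != i) => //.
apply: measurable_and => //; apply: measurable_or.
  by apply: measurable_fun_ltr; exact: measurable_score.
apply: measurable_and.
  by apply: measurable_fun_eqr; exact: measurable_score.
by apply: measurable_fun_ltr; apply: measurable_funM.
Qed.

Lemma greedy_routing (i0 : 'I_k) lam sg :
  (forall x i j, q i x = q j x -> c i x = c j x -> i = j) -> sg != 0 ->
  routing (greedy q c lam sg).
Proof.
move=> qc_inj sg0; split; [|split] => [i|x i|x].
- rewrite (_ : (greedy q c lam sg)^~ i =
             fun x => if winner q c lam sg i x then 1 else 0).
    exact: measurable_fun_ifT (measurable_winner _ _ _) _ _.
  by apply/funext => x; rewrite /greedy; case: winner.
- by rewrite /greedy ler0n.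
- exact: greedy_sum1.
Qed.

End GreedyRouting.

Section BudgetedRouting.
Context {d : measure_display} {T : measurableType d} {R : realType}.
Variables (P : probability T R) (k : nat) (q c : 'I_k -> T -> R).
Hypotheses (q_int : forall i, P.-integrable setT (fun x => (q i x)%:E))
           (c_int : forall i, P.-integrable setT (fun x => (c i x)%:E)).

Lemma in_S_Cost_eq_mix lam g h B : routing g -> routing h ->
  in_S q c lam g -> in_S q c lam h ->
  fine (Cost P c g) <= B < fine (Cost P c h) ->
  exists s, [/\ routing s, in_S q c lam s & Cost P c s = B%:E].
Proof.
move=> g_routing h_routing gS hS /andP[Cg_le Ch_gt].
set Cg := fine (Cost P c g) in Cg_le *; set Ch := fine (Cost P c h) in Ch_gt *.
have gap : 0 < Ch - Cg by lra.
pose t := (Ch - B) / (Ch - Cg).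
have t01 : 0 <= t <= 1.
  by apply/andP; split; [apply: divr_ge0 | rewrite ler_pdivrMr // mul1r]; lra.
have tE : t * (Ch - Cg) = Ch - B by rewrite divfK // gt_eqF.
exists (mix t g h); split; [exact: routing_mix | exact: in_S_mix |].
by rewrite Cost_mix // -/Cg -/Ch; congr EFin; lra.
Qed.

Lemma exists_in_S_Cost_eq (i0 : 'I_k) B s0 :
  finite_set (Lambda q c) -> routing s0 -> (Cost P c s0 <= B%:E)%E ->
  ~ (exists s, routing s /\ in_S q c 0 s /\ (Cost P c s <= B%:E)%E) ->
  exists2 lam, 0 <= lam &
    exists s, [/\ routing s, in_S q c lam s & Cost P c s = B%:E].
Proof.
move=> Lambda_fin s0_routing s0_le_B no_S0.
have [M M_gt0 ub_M] := finite_set_ub Lambda_fin.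
have qc_inj := bounded_Lambda_qc_inj ub_M.
have q_meas i : measurable_fun setT (q i).
  exact/measurable_EFinP/(measurable_int _ (q_int i)).
have c_meas i : measurable_fun setT (c i).
  exact/measurable_EFinP/(measurable_int _ (c_int i)).
have cheap_routing lam : routing (greedy q c lam 1).
  by apply: greedy_routing; rewrite ?oner_neq0.
have costly_routing lam : routing (greedy q c lam (-1)).
  by apply: greedy_routing; rewrite ?oppr_eq0 ?oner_neq0.
pose phi lam := fine (Cost P c (greedy q c lam 1)).
pose psi lam := fine (Cost P c (greedy q c lam (-1))).
have phi_psi a b :
    a < b -> (forall r, a < r < b -> ~ Lambda q c r) -> phi a = psi b.
  by move=> ab no_Lambda; rewrite /phi /psi (greedy_shift qc_inj ab no_Lambda i0).
have B_lt_phi0 : B < phi 0.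
  rewrite ltNge; apply/negP => phi0_le_B; apply: no_S0; exists (greedy q c 0 1).
  split; [exact: cheap_routing | split; first exact: greedy_in_S].
  by rewrite -[Cost _ _ _]fineK ?lee_fin // Cost_fin_num.
have phiM_le_B : phi M <= B.
  rewrite -lee_fin fineK ?Cost_fin_num //; apply: le_trans s0_le_B.
  apply: le_Cost => // x; have [_ [s0_ge0 s0_sum1]] := s0_routing.
  exact: greedy_cheapest.
have [lam /andP[lam_ge0 _] phi_psi_lam] :=
  discrete_ivt phi_psi Lambda_fin M_gt0 B_lt_phi0 phiM_le_B.
exists lam => //; apply: in_S_Cost_eq_mix phi_psi_lam;
  [exact: cheap_routing | exact: costly_routing | exact: greedy_in_S | exact: greedy_in_S].
Qed.

End BudgetedRouting.

Theorem theorem4 (d : measure_display) (T : measurableType d) (R : realType)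
  (P : probability T R) (k : nat) (q c : 'I_k -> T -> R) (B : R) :
  (0 < k)%N ->
  (forall i, P.-integrable setT (fun x => (q i x)%:E)) ->
  (forall i, P.-integrable setT (fun x => (c i x)%:E)) ->
  (exists s, routing s /\ (Cost P c s <= B%:E)%E) ->
  finite_set (Lambda q c) ->
  (forall s, routing s -> in_S q c 0 s -> (Cost P c s <= B%:E)%E ->
     optimal P q c B s) /\
  (~ (exists s, routing s /\ in_S q c 0 s /\ (Cost P c s <= B%:E)%E) ->
     (exists lam, 0 <= lam /\
        exists s, routing s /\ in_S q c lam s /\ Cost P c s = B%:E) /\
     (forall s, routing s -> (exists lam, 0 <= lam /\ in_S q c lam s) ->
        Cost P c s = B%:E -> optimal P q c B s)).
Proof.
move=> k_gt0 q_int c_int [s0 [s0_routing s0_le_B]] Lambda_fin.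
split=> [s s_routing sS s_le_B|no_S0].
  exact: (optimal_in_S (B := B) q_int c_int (lexx 0) s_routing sS s_le_B
    (or_introl erefl)).
split=> [|s s_routing [lam [lam_ge0 sS]] s_eq_B].
  have [lam lam_ge0 [s [s_routing sS s_eq_B]]] := exists_in_S_Cost_eq q_int c_int
    (Ordinal k_gt0) Lambda_fin s0_routing s0_le_B no_S0.
  by exists lam; split=> //; exists s.
apply: (optimal_in_S (B := B) q_int c_int lam_ge0 s_routing sS _
  (or_intror s_eq_B)).
by rewrite s_eq_B.
Qed.
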